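(* Consider plain SGD (no momentum) with scalar learning rate $\lambda>0$ and batch size $S$ on $L_2$-regularized linear regression in the limit $N\to\infty$, with $[A,\Gamma]=0$. Let $K:=A+\Gamma$, $U:=\mathbf{u}\mathbf{u}^{\mathrm T}$, $G:=2I_D-\lambda\left(K+\frac1SK^{-1}A^2\right)$, $\kappa:=\frac{\mathrm{Tr}[A^2K^{-1}G^{-1}]}{1-\frac\lambda S\mathrm{Tr}[A^2K^{-1}G^{-1}]}$, $r:=\frac{\mathrm{Tr}[A^3K^{-3}\Gamma^2G^{-1}U]}{1-\frac\lambda S\mathrm{Tr}[A^2K^{-1}G^{-1}]}$ (with $K,G$ invertible and the denominator nonzero). Then the expected test loss $L_{\rm test}:=\frac12\mathbb{E}_{\mathbf{w}}[(\mathbf{w}-\mathbf{u})^{\mathrm T}A(\mathbf{w}-\mathbf{u})]$ is $$L_{\rm test}=\frac{\lambda}{2S}\left(\mathrm{Tr}[AK^{-2}\Gamma^2U]\kappa+r\right)+\frac12\mathrm{Tr}[AK^{-2}\Gamma^2U].$$ Moreover, if $A$, $\Gamma$ and $U$ pairwise commute, then $$\Sigma=\frac\lambda S\mathrm{Tr}[AK^{-2}\Gamma^2U]\left(1+\frac{\lambda\kappa}{S}\right)AK^{-1}G^{-1}+\frac\lambda S\left(A^2K^{-2}\Gamma^2U+\frac{\lambda r}{S}A\right)K^{-1}G^{-1}.$$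
   Context: Data: $x_i\in\mathbb{R}^D$ i.i.d. $\mathcal N(0,A)$, $A$ symmetric positive definite; labels $y_i=\mathbf{u}^{\mathrm T}x_i$; $\Gamma$ symmetric. Loss $L_\Gamma(\mathbf{w})=\frac{1}{2N}\sum_i[(\mathbf{w}-\mathbf{u})^{\mathrm T}x_i]^2+\frac12\mathbf{w}^{\mathrm T}\Gamma\mathbf{w}$, whose Hessian is $K=A+\Gamma$ as $N\to\infty$. SGD: $\mathbf{w}_t=\mathbf{w}_{t-1}-\frac\lambda S\sum_{i\in B_t}\nabla\ell_i(\mathbf{w}_{t-1})$. The stationary distribution has mean $\mathbf{w}^*=K^{-1}A\mathbf{u}$ and covariance $\Sigma:=\mathbb{E}_{\mathbf{w}}[(\mathbf{w}-\mathbf{w}^* )(\mathbf{w}-\mathbf{w}^* )^{\mathrm T}]$, determined by the stationarity equation $\lambda(K\Sigma+\Sigma K)-\lambda^2K\Sigma K=\lambda^2C$, where the averaged minibatch noise covariance is $C=\frac1S\big(A\Sigma A+\mathrm{Tr}[A\Sigma]A+\mathrm{Tr}[AK^{-2}\Gamma^2U]A+AK^{-1}\Gamma U\Gamma K^{-1}A\big)$. *)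

From HB Require Import structures.
From mathcomp Require Import all_boot all_order all_algebra.
From mathcomp Require Import reals.
Set Implicit Arguments. Unset Strict Implicit. Unset Printing Implicit Defensive.
Import Order.TTheory GRing.Theory Num.Theory.
Local Open Scope ring_scope.

Section SGD.
Variables (R : realType) (n : nat).
Implicit Types (A Gam Sig : 'M[R]_n) (u : 'cV[R]_n) (lam : R) (S : nat).

Definition posdef A :=
  A^T = A /\ forall v : 'cV[R]_n, v != 0 -> 0 < (v^T *m A *m v) 0 0.

Definition Kmat A Gam : 'M[R]_n := A + Gam.
Definition Umat u : 'M[R]_n := u *m u^T.
Definition Kinv A Gam : 'M[R]_n := invmx (Kmat A Gam).

Definition Gmat A Gam lam S : 'M[R]_n :=
  (2%:R)%:M - lam *: (Kmat A Gam + (S%:R)^-1 *: (Kinv A Gam *m A *m A)).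
Definition Ginv A Gam lam S : 'M[R]_n := invmx (Gmat A Gam lam S).

Definition tAKG A Gam lam S : R :=
  \tr (A *m A *m Kinv A Gam *m Ginv A Gam lam S).

Definition denom A Gam lam S : R := 1 - lam / S%:R * tAKG A Gam lam S.

Definition kappa A Gam lam S : R := tAKG A Gam lam S / denom A Gam lam S.

Definition rr A Gam u lam S : R :=
  \tr (A *m A *m A *m Kinv A Gam *m Kinv A Gam *m Kinv A Gam *m Gam *m Gam
        *m Ginv A Gam lam S *m Umat u) / denom A Gam lam S.

Definition tbias A Gam u : R :=
  \tr (A *m Kinv A Gam *m Kinv A Gam *m Gam *m Gam *m Umat u).

(* averaged minibatch noise covariance C *)
Definition Cmat A Gam u S Sig : 'M[R]_n :=
  (S%:R)^-1 *: (A *m Sig *m A + \tr (A *m Sig) *: A + tbias A Gam u *: A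
     + A *m Kinv A Gam *m Gam *m Umat u *m Gam *m Kinv A Gam *m A).

Definition stationary A Gam u lam S Sig : Prop :=
  lam *: (Kmat A Gam *m Sig + Sig *m Kmat A Gam)
    - lam ^+ 2 *: (Kmat A Gam *m Sig *m Kmat A Gam)
  = lam ^+ 2 *: Cmat A Gam u S Sig.

(* mean of the stationary distribution w* = K^{-1} A u *)
Definition wstar A Gam u : 'cV[R]_n := Kinv A Gam *m A *m u.

(* expected test loss (1/2) E[(w-u)^T A (w-u)] for w with mean w* and
   covariance Sig, written via the bias-variance decomposition
   E[(w-u)^T A (w-u)] = Tr[A Sig] + (w*-u)^T A (w*-u). *)
Definition Ltest A Gam u Sig : R :=
  2%:R^-1 * (\tr (A *m Sig)
    + ((wstar A Gam u - u)^T *m A *m (wstar A Gam u - u)) 0 0).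

End SGD.

From HB Require Import structures.
From mathcomp Require Import all_boot all_order all_algebra.
From mathcomp Require Import reals.
From mathcomp Require Import ring.
Import Order.TTheory GRing.Theory Num.Theory.
Local Open Scope ring_scope.

(* Because A and Gam commute, A, Gam, K = A + Gam, G and their inverses all
   lie in the bicommutant of {A, Gam}: they commute with one another and with
   every matrix commuting with A and Gam.  Moving the noise term
   (lam^2/S) A Sig A to the left, the stationarity equation reads
     L Sig = (lam^2/S) ((Tr[A Sig] + b) A + W),
     L X = lam (K X + X K) - lam^2 K X K - (lam^2/S) A X A,
   with b = Tr[A K^-2 Gam^2 U] and W = A K^-1 Gam U Gam K^-1 A.  The operator L
   is self-adjoint for the trace pairing and L (K^-1 G^-1 P) = lam P whenever
   P commutes with A and Gam.  Pairing with K^-1 G^-1 A thus turns the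
   equation into the scalar affine equation
     T = (lam/S) ((T + b) Tr[A^2 K^-1 G^-1] + Tr[A^3 K^-3 Gam^2 G^-1 U])
   for T = Tr[A Sig], and L_test = (T + b)/2.  When U commutes with A and Gam,
   the same identity shows that K^-1 G^-1 (lam/S) ((T + b) A + W) is a
   symmetric solution of the stationarity equation, so it is Sig by
   uniqueness. *)

Section Commutation.
Context {R : comUnitRingType} {n : nat}.
Implicit Types X Y Z : 'M[R]_n.

Lemma comm_mxZ X Y (a : R) : comm_mx X Y -> comm_mx X (a *: Y).
Proof. by rewrite /comm_mx -scalemxAl -scalemxAr => ->. Qed.

Lemma comm_mx_invmx X Y : comm_mx X Y -> comm_mx X (invmx Y).
Proof.
have [Yu XY | /invmx_out -> //] := boolP (Y \in unitmx).
by rewrite /comm_mx -[X in X *m _](mulKmx Yu) -XY -!mulmxA mulmxV // mulmx1.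
Qed.

Lemma comm_mx_sort {X Y} : comm_mx X Y ->
  (Y *m X = X *m Y) * (forall m (P : 'M_(m, n)), P *m Y *m X = P *m X *m Y).
Proof. by move=> XY; split=> [|m P]; rewrite -?mulmxA XY. Qed.

Lemma trmx_mul_comm X Y : X^T = X -> Y^T = Y -> comm_mx X Y -> (X *m Y)^T = X *m Y.
Proof. by move=> hX hY XY; rewrite trmx_mul hX hY XY. Qed.

Definition bicommutant A B X := forall Y, comm_mx A Y -> comm_mx B Y -> comm_mx X Y.

Section Bicommutant.
Context {A B : 'M[R]_n}.

Lemma bicommutant_l : bicommutant A B A. Proof. by []. Qed.
Lemma bicommutant_r : bicommutant A B B. Proof. by []. Qed.

Lemma bicommutant_scalar a : bicommutant A B a%:M.
Proof. by move=> Y _ _; apply: comm_scalar_mx. Qed.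

Lemma bicommutantD {X Y} :
  bicommutant A B X -> bicommutant A B Y -> bicommutant A B (X + Y).
Proof.
by move=> bX bY Z hA hB; apply/comm_mx_sym/comm_mxD; apply/comm_mx_sym; [apply: bX | apply: bY].
Qed.

Lemma bicommutantB {X Y} :
  bicommutant A B X -> bicommutant A B Y -> bicommutant A B (X - Y).
Proof.
by move=> bX bY Z hA hB; apply/comm_mx_sym/comm_mxB; apply/comm_mx_sym; [apply: bX | apply: bY].
Qed.

Lemma bicommutantM {X Y} :
  bicommutant A B X -> bicommutant A B Y -> bicommutant A B (X *m Y).
Proof.
by move=> bX bY Z hA hB; apply/comm_mx_sym/comm_mxM; apply/comm_mx_sym; [apply: bX | apply: bY].
Qed.

Lemma bicommutantZ a {X} : bicommutant A B X -> bicommutant A B (a *: X).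
Proof. by move=> bX Z hA hB; apply/comm_mx_sym/comm_mxZ/comm_mx_sym/bX. Qed.

Lemma bicommutantV {X} : bicommutant A B X -> bicommutant A B (invmx X).
Proof. by move=> bX Z hA hB; apply/comm_mx_sym/comm_mx_invmx/comm_mx_sym/bX. Qed.

Hypothesis cAB : comm_mx A B.

Lemma bicommutant_comm {X Y} : bicommutant A B X -> bicommutant A B Y -> comm_mx X Y.
Proof.
move=> bX bY; apply/comm_mx_sym/bY; apply/comm_mx_sym.
  exact: bX (comm_mx_refl A) (comm_mx_sym cAB).
exact: bX cAB (comm_mx_refl B).
Qed.

End Bicommutant.
End Commutation.

Definition stationary_op {R : comPzRingType} {n} (lam mu : R) (K A X : 'M[R]_n) :=
  lam *: (K *m X + X *m K) - lam ^+ 2 *: (K *m X *m K) - mu *: (A *m X *m A).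

Lemma mxtrace_stationary_op (R : comPzRingType) n (lam mu : R) (K A X Y : 'M[R]_n) :
  \tr (Y *m stationary_op lam mu K A X) = \tr (stationary_op lam mu K A Y *m X).
Proof.
rewrite /stationary_op !(mulmxBr, mulmxBl) -!(scalemxAr, scalemxAl) !(mulmxDr, mulmxDl).
rewrite !(raddfB, raddfD) /= !mxtraceZ !mulmxA [\tr (Y *m X *m K)]mxtrace_mulC.
rewrite [\tr (Y *m K *m X *m K)]mxtrace_mulC [\tr (Y *m A *m X *m A)]mxtrace_mulC.
by rewrite !mulmxA [in RHS](addrC (lam * _)).
Qed.

Lemma affine_fixpointE {F : fieldType} {c t b r T : F} : 1 - c * t != 0 ->
  T = c * ((T + b) * t + r) <-> T = c * (b * (t / (1 - c * t)) + r / (1 - c * t)).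
Proof.
move=> hd.
have solvedE T' : T' = c * ((T' + b) * t + r) <-> T' * (1 - c * t) = c * (b * t + r).
  split=> hT'.
    by transitivity (T' - c * t * T'); [ring | rewrite {1}hT'; ring].
  by transitivity (T' * (1 - c * t) + c * t * T'); [ring | rewrite hT'; ring].
rewrite solvedE; split=> [hT | ->]; last by field.
by apply: (mulIf hd); rewrite hT; field.
Qed.

Set Implicit Arguments.
Unset Strict Implicit.

Section StationaryCovariance.
Variables (R : realType) (n S : nat) (A Gam : 'M[R]_n) (u : 'cV[R]_n) (lam : R).
Hypotheses (hAT : A^T = A) (hGamT : Gam^T = Gam) (cAGam : comm_mx A Gam).
Hypotheses (hK : Kmat A Gam \in unitmx) (hG : Gmat A Gam lam S \in unitmx).

Local Notation K := (Kmat A Gam).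
Local Notation Ki := (Kinv A Gam).
Local Notation G := (Gmat A Gam lam S).
Local Notation Gi := (Ginv A Gam lam S).
Local Notation U := (Umat u).
Local Notation b := (tbias A Gam u).
Local Notation t := (tAKG A Gam lam S).
Local Notation c := (lam / S%:R).
Local Notation L := (stationary_op lam (lam ^+ 2 / S%:R) K A).
Local Notation W := (A *m Ki *m Gam *m U *m Gam *m Ki *m A).
Local Notation rnum := (\tr (A *m A *m A *m Ki *m Ki *m Ki *m Gam *m Gam *m Gi *m U)).

Let bA : bicommutant A Gam A := bicommutant_l.
Let bGam : bicommutant A Gam Gam := bicommutant_r.
Let bK : bicommutant A Gam K := bicommutantD bA bGam.
Let bKi : bicommutant A Gam Ki := bicommutantV bK.
Let bG : bicommutant A Gam G :=
  bicommutantB (bicommutant_scalar _)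
    (bicommutantZ _ (bicommutantD bK (bicommutantZ _ (bicommutantM (bicommutantM bKi bA) bA)))).
Let bGi : bicommutant A Gam Gi := bicommutantV bG.

Let sortE {X Y} (bX : bicommutant A Gam X) (bY : bicommutant A Gam Y) :=
  comm_mx_sort (bicommutant_comm cAGam bX bY).

(* Each commutation is oriented along A < Gam < K < K^-1 < G < G^-1, so that
   rewriting with [mx_sort] after [mulmxA] sorts any product of these
   matrices and cancels the adjacent pairs K K^-1 and G G^-1. *)
Let mx_sort := (sortE bA bGam, sortE bA bK, sortE bA bKi, sortE bA bG, sortE bA bGi,
  sortE bGam bK, sortE bGam bKi, sortE bGam bG, sortE bGam bGi,
  sortE bK bKi, sortE bK bG, sortE bK bGi, sortE bKi bG, sortE bKi bGi, sortE bG bGi,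
  mulmxV hK, fun m => @mulmxK _ _ m _ hK, mulmxV hG, fun m => @mulmxK _ _ m _ hG,
  @mul1mx R n, fun m => @mulmx1 R m n).

Lemma Kmat_sym : K^T = K.
Proof. by rewrite linearD /= hAT hGamT. Qed.

Lemma Kinv_sym : Ki^T = Ki.
Proof. by rewrite trmx_inv Kmat_sym. Qed.

Lemma Gmat_sym : G^T = G.
Proof.
rewrite /Gmat linearB /= tr_scalar_mx [(lam *: _)^T]linearZ linearD /=.
by rewrite [(_ *: _)^T]linearZ /= Kmat_sym !trmx_mul Kinv_sym hAT ?mulmxA ?mx_sort.
Qed.

Lemma Ginv_sym : Gi^T = Gi.
Proof. by rewrite trmx_inv Gmat_sym. Qed.

Lemma wstar_sub : wstar A Gam u - u = - (Ki *m Gam *m u).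
Proof.
have hu : u = Ki *m A *m u + Ki *m Gam *m u by rewrite -mulmxDl -mulmxDr mulVmx // mul1mx.
by rewrite /wstar {2}hu opprD addrA subrr add0r.
Qed.

Lemma bias_wstar : ((wstar A Gam u - u)^T *m A *m (wstar A Gam u - u)) 0 0 = b.
Proof.
have mx11_trace (M : 'M[R]_1) : M 0 0 = \tr M by rewrite /mxtrace big_ord1.
rewrite wstar_sub mulmxN [(- _)^T]linearN /= !mulNmx opprK !trmx_mul Kinv_sym hGamT mx11_trace.
rewrite -!mulmxA mxtrace_mulC !mulmxA -(mulmxA _ u u^T).
by rewrite /tbias ?mulmxA ?mx_sort.
Qed.

Lemma stationaryE Sig : stationary A Gam u lam S Sig <->
  L Sig = (lam ^+ 2 / S%:R) *: ((\tr (A *m Sig) + b) *: A + W).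
Proof.
rewrite /stationary /Cmat /stationary_op scalerA.
rewrite -(addrA (A *m Sig *m A)) -addrA -scalerDl (scalerDr (lam ^+ 2 / S%:R)).
by split=> [-> | <-]; [rewrite addrAC subrr add0r | rewrite [RHS]addrC subrK].
Qed.

Lemma Kmat_Gmat : K *m G = 2%:R *: K - lam *: (K *m K + S%:R^-1 *: (A *m A)).
Proof.
by rewrite /Gmat mulmxBr mul_mx_scalar -scalemxAr mulmxDr -scalemxAr !mulmxA mulmxV // mul1mx.
Qed.

Lemma stationary_op_comm X : comm_mx K X -> comm_mx A X -> L X = lam *: (K *m G *m X).
Proof.
move=> cKX cAX.
rewrite /stationary_op -mulmxA -cKX -[A *m X *m A]mulmxA -cAX !mulmxA Kmat_Gmat.
rewrite mulmxBl -!scalemxAl (mulmxDl (K *m K)) -scalemxAl.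
move: (K *m X) (K *m K *m X) (A *m A *m X) => KX KKX AAX.
by apply/matrixP=> i j; rewrite !mxE; ring.
Qed.

Lemma stationary_op_resolvent P : comm_mx A P -> comm_mx Gam P ->
  L (Ki *m Gi *m P) = lam *: P.
Proof.
move=> cAP cGamP.
have cKiGiP Y (bY : bicommutant A Gam Y) : comm_mx Y (Ki *m Gi *m P) :=
  comm_mxM (bicommutant_comm cAGam bY (bicommutantM bKi bGi)) (bY P cAP cGamP).
rewrite (stationary_op_comm (cKiGiP _ bK) (cKiGiP _ bA)).
by rewrite !mulmxA ?mx_sort.
Qed.

Lemma mxtrace_resolvent X : \tr (Ki *m Gi *m A *m L X) = lam * \tr (A *m X).
Proof. by rewrite mxtrace_stationary_op stationary_op_resolvent // -scalemxAl mxtraceZ. Qed.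

Lemma stationary_mxtrace Sig : lam != 0 -> stationary A Gam u lam S Sig ->
  \tr (A *m Sig) = c * ((\tr (A *m Sig) + b) * t + rnum).
Proof.
move=> lam0 /stationaryE /(congr1 (fun Y => \tr (Ki *m Gi *m A *m Y))).
rewrite mxtrace_resolvent -scalemxAr mxtraceZ mulmxDr -scalemxAr mxtraceD mxtraceZ.
have -> : \tr (Ki *m Gi *m A *m A) = t by rewrite /tAKG ?mx_sort.
have -> : \tr (Ki *m Gi *m A *m W) = rnum.
  rewrite (_ : _ *m W = (Ki *m Gi *m A *m A *m Ki *m Gam *m U) *m (Gam *m Ki *m A)).
    by rewrite mxtrace_mulC ?mulmxA ?mx_sort.
  by rewrite !mulmxA.
by move=> h; apply: (mulfI lam0); rewrite h; ring.
Qed.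

Definition stationary_trAS : R := c * (b * kappa A Gam lam S + rr A Gam u lam S).

Lemma Ltest_stationary Sig : lam != 0 -> denom A Gam lam S != 0 ->
  stationary A Gam u lam S Sig -> Ltest A Gam u Sig = 2%:R^-1 * (stationary_trAS + b).
Proof.
move=> lam0 hden /(stationary_mxtrace lam0) /(affine_fixpointE hden) hT.
by rewrite /Ltest bias_wstar hT.
Qed.

(* Stated for an abstract Y rather than for U = u *m u^T, which [mulmxA]
   would unfold, breaking the sorting. *)
Section Sandwich.
Variable Y : 'M[R]_n.
Hypotheses (cAY : comm_mx A Y) (cGamY : comm_mx Gam Y).

Local Notation VY := (A *m A *m Ki *m Ki *m Gam *m Gam *m Y).

Let sortY {X} (bX : bicommutant A Gam X) := comm_mx_sort (bX Y cAY cGamY).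
Let mx_sortY := (mx_sort, sortY bA, sortY bGam, sortY bK, sortY bKi, sortY bG, sortY bGi).

Lemma sandwich_sorted : A *m Ki *m Gam *m Y *m Gam *m Ki *m A = VY.
Proof. by rewrite ?mulmxA ?mx_sortY. Qed.

Lemma comm_mx_sandwich X : bicommutant A Gam X -> comm_mx X VY.
Proof. by move=> bX; apply: bX; rewrite /comm_mx ?mulmxA ?mx_sortY. Qed.

Lemma sandwich_sym : Y^T = Y -> VY^T = VY.
Proof. by move=> hY; rewrite !trmx_mul hAT Kinv_sym hGamT hY ?mulmxA ?mx_sortY. Qed.

End Sandwich.

Local Notation V := (A *m A *m Ki *m Ki *m Gam *m Gam *m U).
Local Notation P := (c *: ((stationary_trAS + b) *: A + V)).

Definition stationary_cov : 'M[R]_n := Ki *m Gi *m P.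

Lemma Umat_sym : U^T = U.
Proof. by rewrite trmx_mul trmxK. Qed.

Section CommutingU.
Hypotheses (cAU : comm_mx A U) (cGamU : comm_mx Gam U).

Lemma comm_mx_stationary_rhs X : bicommutant A Gam X -> comm_mx X P.
Proof.
move=> bX; apply/comm_mxZ/comm_mxD; first exact/comm_mxZ/bX.
exact: comm_mx_sandwich.
Qed.

Lemma stationary_cov_sym : stationary_cov^T = stationary_cov.
Proof.
apply: trmx_mul_comm; last exact: comm_mx_stationary_rhs (bicommutantM bKi bGi).
  by rewrite trmx_mul Kinv_sym Ginv_sym ?mx_sort.
by rewrite linearZ /= linearD /= linearZ /= hAT sandwich_sym // Umat_sym.
Qed.

Lemma mxtrace_stationary_cov : denom A Gam lam S != 0 ->
  \tr (A *m stationary_cov) = stationary_trAS.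
Proof.
move=> hden; transitivity (c * ((stationary_trAS + b) * t + rnum)).
  rewrite /stationary_cov -!scalemxAr !mulmxDr -!scalemxAr mxtraceZ mxtraceD mxtraceZ.
  by rewrite /tAKG ?mulmxA ?mx_sort.
exact/esym/(affine_fixpointE hden).
Qed.

Lemma stationary_cov_solution : denom A Gam lam S != 0 ->
  stationary A Gam u lam S stationary_cov.
Proof.
move=> hden; apply/stationaryE.
rewrite [in LHS]/stationary_cov stationary_op_resolvent; try exact: comm_mx_stationary_rhs.
by rewrite mxtrace_stationary_cov // sandwich_sorted // scalerA mulrA -expr2.
Qed.

Lemma stationary_covE : stationary_cov =
  (c * b * (1 + lam * kappa A Gam lam S / S%:R)) *: (A *m Ki *m Gi)
  + c *: ((V + (lam * rr A Gam u lam S / S%:R) *: A) *m Ki *m Gi).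
Proof.
rewrite /stationary_cov -!scalemxAr mulmxDr -scalemxAr !mulmxDl -!scalemxAl.
have -> : Ki *m Gi *m A = A *m Ki *m Gi by rewrite ?mulmxA ?mx_sort.
have -> : Ki *m Gi *m V = V *m Ki *m Gi.
  by rewrite (comm_mx_sandwich cAU cGamU (bicommutantM bKi bGi)) mulmxA.
rewrite /stationary_trAS; move: (A *m Ki *m Gi) (V *m Ki *m Gi) => M N.
by apply/matrixP=> i j; rewrite !mxE; ring.
Qed.

End CommutingU.

End StationaryCovariance.

Theorem theorem3 (R : realType) (n S : nat) (A Gam Sig : 'M[R]_n)
  (u : 'cV[R]_n) (lam : R)
  (hA : posdef A) (hGam : Gam^T = Gam) (hAG : A *m Gam = Gam *m A)
  (hlam : 0 < lam) (hS : (0 < S)%N)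
  (hK : Kmat A Gam \in unitmx) (hG : Gmat A Gam lam S \in unitmx)
  (hden : denom A Gam lam S != 0)
  (hSigsym : Sig^T = Sig)
  (hstat : stationary A Gam u lam S Sig)
  (huniq : forall Sig' : 'M[R]_n, Sig'^T = Sig' ->
             stationary A Gam u lam S Sig' -> Sig' = Sig) :
  Ltest A Gam u Sig =
    lam / (2%:R * S%:R) * (tbias A Gam u * kappa A Gam lam S + rr A Gam u lam S)
    + 2%:R^-1 * tbias A Gam u
  /\
  (A *m Umat u = Umat u *m A -> Gam *m Umat u = Umat u *m Gam ->
   Sig =
     (lam / S%:R * tbias A Gam u * (1 + lam * kappa A Gam lam S / S%:R))
       *: (A *m Kinv A Gam *m Ginv A Gam lam S)
     + (lam / S%:R) *:
       ((A *m A *m Kinv A Gam *m Kinv A Gam *m Gam *m Gam *m Umat u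
         + (lam * rr A Gam u lam S / S%:R) *: A)
        *m Kinv A Gam *m Ginv A Gam lam S)).
Proof.
have [hAT _] := hA.
have lam0 := lt0r_neq0 hlam.
split.
  rewrite (Ltest_stationary hAT hGam hAG hK hG lam0 hden hstat) /stationary_trAS invfM.
  ring.
move=> cAU cGamU; rewrite -stationary_covE //.
apply: esym; apply: huniq.
  exact: stationary_cov_sym.
exact: stationary_cov_solution.
Qed.
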